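(* Fix bidder $i$ and $v_{-i}$, and assume $f_{i,k}>0$ for all $k$. Suppose $k\mapsto x_i(z_{i,k},v_{-i})$ is non-decreasing, the actual payments $p_i(z_{i,k},v_{-i})\ge0$ satisfy $p_i(z_{i,\ell},v_{-i})^2= z_{i,\ell}x_i(z_{i,\ell},v_{-i})-\sum_{j=1}^{\ell-1}(z_{i,j+1}-z_{i,j})x_i(z_{i,j},v_{-i})$ for all $\ell$, and $p_i(z_{i,k},v_{-i})>0$ for all $k$. Then $$\sum_{k=1}^{K_i} f_{i,k}\,p_i(z_{i,k},v_{-i})\ \ge\ \sum_{k=1}^{K_i} f_{i,k}\,\frac{\varphi_{i,k}\,x_i(z_{i,k},v_{-i})}{p_i(z_{i,k},v_{-i})}.$$
   Context: Bidder $i$'s type space is $V_i=\{z_{i,1}<\dots<z_{i,K_i}\}\subset[0,\infty)$, with the convention $z_{i,K_i+1}=z_{i,K_i}$; $f_{i,k}$ is the probability of $z_{i,k}$ and $F_{i,k}=\sum_{j\le k}f_{i,j}$. The (discrete) virtual value is $\varphi_{i,k}=z_{i,k}-(z_{i,k+1}-z_{i,k})\frac{1-F_{i,k}}{f_{i,k}}$. $x_i(\cdot,v_{-i}):V_i\to[0,1]$ is bidder $i$'s allocation given the others' types $v_{-i}$. *)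

From HB Require Import structures.
From mathcomp Require Import all_boot all_order all_algebra.
Set Implicit Arguments. Unset Strict Implicit. Unset Printing Implicit Defensive.
Import Order.TTheory GRing.Theory Num.Theory.
Local Open Scope ring_scope.

(* Types are indexed 0..K-1 (paper: 1..K).  Sequences are functions nat -> R,
   only their values at indices < K matter. *)

(* z_{k+1} with the convention z_{K+1} = z_K (0-indexed: z_K := z_{K-1}). *)
Definition znext (R : pzRingType) (K : nat) (z : nat -> R) (k : nat) : R :=
  if (k.+1 < K)%N then z k.+1 else z k.

Definition cdf (R : pzRingType) (f : nat -> R) (k : nat) : R :=
  \sum_(j < k.+1) f j.

Definition virtual_value (R : fieldType) (K : nat) (z f : nat -> R) (k : nat) : R :=
  z k - (znext K z k - z k) * (1 - cdf f k) / f k.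

From HB Require Import structures.
From mathcomp Require Import all_boot all_order all_algebra.
From mathcomp Require Import ring lra.
Set Implicit Arguments. Unset Strict Implicit. Unset Printing Implicit Defensive.
Import Order.TTheory GRing.Theory Num.Theory.
Local Open Scope ring_scope.

(* Write G_n for the tail mass 1 - F_{n-1} and U_n for the envelope utility
   sum_{j<n} (z_{j+1} - z_j) x_j, so that p_n^2 = z_n x_n - U_n.  Expanding the
   virtual value, the k-th term of the difference of the two sides equals
   (W_{k+1} - W_k) / p_k with W = G U.  Since W vanishes at both ends and is
   nonnegative in between, while 1/p_k is nonincreasing (p_k^2 grows by
   z_{k+1}(x_{k+1} - x_k) >= 0), summation by parts makes the sum nonnegative. *)

Definition tail_mass (R : pzRingType) (f : nat -> R) (n : nat) : R :=
  1 - \sum_(j < n) f j.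

Definition envelope_utility (R : pzRingType) (z x : nat -> R) (n : nat) : R :=
  \sum_(j < n) (z j.+1 - z j) * x j.

Lemma tail_massS (R : pzRingType) (f : nat -> R) (n : nat) :
  tail_mass f n.+1 = tail_mass f n - f n.
Proof. by rewrite /tail_mass big_ord_recr /= opprD addrA. Qed.

Lemma tail_mass_ge0 (R : realDomainType) (K n : nat) (f : nat -> R) :
  (forall k, (k < K)%N -> 0 <= f k) -> \sum_(k < K) f k = 1 ->
  (n <= K)%N -> 0 <= tail_mass f n.
Proof.
move=> f_ge0 f_sum1 le_nK; rewrite /tail_mass subr_ge0 -f_sum1.
rewrite (big_ord_widen K f le_nK) [X in _ <= X](bigID (fun i : 'I_K => (i < n)%N)).
by rewrite lerDl sumr_ge0 // => i _; apply: f_ge0.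
Qed.

Lemma tail_mass_total (R : pzRingType) (K : nat) (f : nat -> R) :
  \sum_(k < K) f k = 1 -> tail_mass f K = 0.
Proof. by rewrite /tail_mass => ->; rewrite subrr. Qed.

(* The convention z_{K+1} = z_K is harmless: the tail mass after the last type is 0. *)
Lemma znext_tail_mass (R : pzRingType) (K k : nat) (z f : nat -> R) :
  \sum_(j < K) f j = 1 -> (k < K)%N ->
  (znext K z k - z k) * tail_mass f k.+1 = (z k.+1 - z k) * tail_mass f k.+1.
Proof.
move=> f_sum1 lt_kK; rewrite /znext; case: ltnP => // le_Kk1.
have -> : k.+1 = K by apply/eqP; rewrite eqn_leq lt_kK.
by rewrite tail_mass_total // !mulr0.
Qed.

Lemma envelope_utilityS (R : pzRingType) (z x : nat -> R) (n : nat) :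
  envelope_utility z x n.+1 = envelope_utility z x n + (z n.+1 - z n) * x n.
Proof. by rewrite /envelope_utility big_ord_recr. Qed.

Lemma envelope_utility_ge0 (R : realDomainType) (K n : nat) (z x : nat -> R) :
  (forall k, (k.+1 < K)%N -> z k <= z k.+1) ->
  (forall k, (k < K)%N -> 0 <= x k) ->
  (n < K)%N -> 0 <= envelope_utility z x n.
Proof.
move=> z_mono x_ge0 lt_nK; apply: sumr_ge0 => i _.
have lt_i1K : (i.+1 < K)%N := leq_ltn_trans (ltn_ord i) lt_nK.
by rewrite mulr_ge0 ?subr_ge0 ?z_mono ?x_ge0 // ltnW.
Qed.

Lemma revenue_term_eq (R : fieldType) (K k : nat) (z f x p : nat -> R) :
  f k != 0 -> p k != 0 ->
  p k ^+ 2 = z k * x k - envelope_utility z x k ->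
  (znext K z k - z k) * tail_mass f k.+1 = (z k.+1 - z k) * tail_mass f k.+1 ->
  f k * p k - f k * (virtual_value K z f k * x k / p k) =
  (tail_mass f k.+1 * envelope_utility z x k.+1
     - tail_mass f k * envelope_utility z x k) / p k.
Proof.
move=> fk_neq0 pk_neq0 pk_sq znext_eq.
have -> : tail_mass f k = tail_mass f k.+1 + f k by rewrite tail_massS subrK.
rewrite envelope_utilityS /virtual_value -[1 - cdf f k]/(tail_mass f k.+1).
apply: (mulIf pk_neq0); rewrite divfK //.
transitivity (f k * p k ^+ 2
              - (f k * z k - (znext K z k - z k) * tail_mass f k.+1) * x k).
  by field; rewrite pk_neq0 fk_neq0.
by rewrite pk_sq znext_eq; ring.
Qed.

Lemma payment_sq_nondecr (R : realDomainType) (n : nat) (z x p : nat -> R) :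
  p n ^+ 2 = z n * x n - envelope_utility z x n ->
  p n.+1 ^+ 2 = z n.+1 * x n.+1 - envelope_utility z x n.+1 ->
  0 <= z n.+1 -> x n <= x n.+1 -> p n ^+ 2 <= p n.+1 ^+ 2.
Proof.
move=> pn_sq pn1_sq zn1_ge0 le_x.
rewrite pn_sq pn1_sq envelope_utilityS.
have : 0 <= z n.+1 * (x n.+1 - x n) by rewrite mulr_ge0 ?subr_ge0.
set U := envelope_utility z x n; lra.
Qed.

(* Summation by parts: the sum is at least W_n q_{n-1}, which is 0 for n = K. *)
Lemma sum_increments_nonincr_ge0 (R : realDomainType) (K : nat) (W q : nat -> R) :
  W 0%N = 0 -> W K = 0 -> (forall n, (n < K)%N -> 0 <= W n) ->
  (forall n, (n.+1 < K)%N -> q n.+1 <= q n) ->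
  0 <= \sum_(k < K) (W k.+1 - W k) * q k.
Proof.
move=> W0 WK W_ge0 q_nonincr.
suff partial : forall n, (n <= K)%N ->
    W n * q n.-1 <= \sum_(k < n) (W k.+1 - W k) * q k.
  by have := partial K (leqnn K); rewrite WK mul0r.
elim=> [|n IH] lt_nK; first by rewrite big_ord0 W0 mul0r.
rewrite big_ord_recr /=.
have {}IH := IH (ltnW lt_nK).
have Wq_step : W n * q n <= W n * q n.-1.
  case: n lt_nK {IH} => [|n] lt_nK //=.
  by rewrite ler_wpM2l ?W_ge0 ?q_nonincr // ltnW.
set S := \sum_(i < n) _ in IH *; lra.
Qed.

Theorem mainTheorem3 (R : realFieldType) (K : nat) (z f x p : nat -> R)
  (hz0 : forall k, (k < K)%N -> 0 <= z k)
  (hzinc : forall k, (k.+1 < K)%N -> z k < z k.+1)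
  (hfpos : forall k, (k < K)%N -> 0 < f k)
  (hfsum : \sum_(k < K) f k = 1)
  (hx01 : forall k, (k < K)%N -> 0 <= x k <= 1)
  (hxmono : forall k, (k.+1 < K)%N -> x k <= x k.+1)
  (hpnn : forall k, (k < K)%N -> 0 <= p k)
  (hpsq : forall l, (l < K)%N ->
      p l ^+ 2 = z l * x l - \sum_(j < l) (z j.+1 - z j) * x j)
  (hppos : forall k, (k < K)%N -> 0 < p k) :
  \sum_(k < K) f k * p k >=
  \sum_(k < K) f k * (virtual_value K z f k * x k / p k).
Proof.
pose W n := tail_mass f n * envelope_utility z x n.
rewrite -subr_ge0 -sumrB.
under eq_bigr => k _ do
  rewrite (revenue_term_eq (K := K)) ?gt_eqF ?hfpos ?hppos ?hpsq
          ?znext_tail_mass // -/(W k.+1) -/(W k).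
apply: (sum_increments_nonincr_ge0 (W := W) (q := fun k => (p k)^-1)).
- by rewrite /W /envelope_utility big_ord0 mulr0.
- by rewrite /W tail_mass_total // mul0r.
- move=> n lt_nK; apply: mulr_ge0.
    by apply: (tail_mass_ge0 (K := K)) (ltnW lt_nK) => // k /hfpos /ltW.
  by apply: (envelope_utility_ge0 (K := K)) => // k; [move/hzinc/ltW | case/hx01/andP].
- move=> n lt_n1K; have lt_nK := ltnW lt_n1K.
  have p_sq_le := payment_sq_nondecr (hpsq _ lt_nK) (hpsq _ lt_n1K)
                    (hz0 _ lt_n1K) (hxmono _ lt_n1K).
  have [pn_gt0 pn1_gt0] := (hppos _ lt_nK, hppos _ lt_n1K).
  by rewrite lef_pV2 ?posrE // -(ler_pXn2r (isT : (0 < 2)%N)) //;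
    rewrite nnegrE ltW.
Qed.
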